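(* There exist two pairwise non-isomorphic Steiner systems $S(2,7,505)$. In particular, a Steiner system $S(2,7,505)$ exists.
   Context: For integers $2\le t<k<v$, a Steiner system $S(t,k,v)$ is a pair $(V,\mathcal B)$ where $V$ is a set with $|V|=v$ and $\mathcal B$ is a family of $k$-element subsets of $V$ (blocks) such that every $t$-element subset of $V$ is contained in exactly one block. Two Steiner systems $(V,\mathcal B)$ and $(V',\mathcal B')$ are isomorphic if there is a bijection $V\to V'$ mapping $\mathcal B$ onto $\mathcal B'$. *)

From mathcomp Require Import all_boot all_fingroup.
Set Implicit Arguments. Unset Strict Implicit. Unset Printing Implicit Defensive.

Definition steiner_system (t k v : nat) (B : {set {set 'I_v}}) : Prop :=
  [/\ 2 <= t, t < k, k < v,
      (forall b, b \in B -> #|b| = k) &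
      (forall S : {set 'I_v}, #|S| = t -> #|[set b in B | S \subset b]| = 1)].

Definition design_iso (v : nat) (B1 B2 : {set {set 'I_v}}) : Prop :=
  exists f : {perm 'I_v}, (fun b : {set 'I_v} => f @: b) @: B1 = B2.

From mathcomp Require Import all_boot all_fingroup all_algebra.
Import GRing.Theory.
Set Implicit Arguments. Unset Strict Implicit. Unset Printing Implicit Defensive.

(* Both designs are developments in Z_505 of (505,7,1) difference families:
   all translates of 12 base blocks.  Call a point p m-rich if three blocks
   through p have at least m common transversals, i.e. blocks avoiding p that
   meet all three.  Richness is transported by isomorphisms, and in a cyclic
   design every point behaves like 0.  The first design has a 10-rich point
   (an explicit witness); in the second, recording for every block which of the
   84 lines through 0 it meets shows that no three lines through 0 have 10
   common transversals. *)

Section Blocks.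
Variable T : finType.
Implicit Types (B : {set {set T}}) (L N : {set T}) (l w : seq T).

Definition transversals B (p : T) L1 L2 L3 : {set {set T}} :=
  [set N in B | [&& p \notin N, N :&: L1 != set0, N :&: L2 != set0 & N :&: L3 != set0]].

Definition rich_point (m : nat) B (p : T) : Prop :=
  exists L1 L2 L3, [/\ [&& L1 \in B, L2 \in B & L3 \in B],
    [&& p \in L1, p \in L2 & p \in L3], [&& L1 != L2, L1 != L3 & L2 != L3] &
    m <= #|transversals B p L1 L2 L3|].

Lemma rich_point_imset m (f : {perm T}) B B' p :
  [set f @: (b : {set T}) | b in B] \subset B' -> rich_point m B p -> rich_point m B' (f p).
Proof.
move=> /subsetP fBB' [L1 [L2 [L3 [/and3P [B1 B2 B3] /and3P [p1 p2 p3] /and3P [n12 n13 n23] m_le]]]].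
have fB b : b \in B -> f @: b \in B' by move=> Bb; apply/fBB'/imset_f.
have f_inj : injective (fun A : {set T} => f @: A) by apply/imset_inj/perm_inj.
have mem_f x (A : {set T}) : (f x \in f @: A) = (x \in A) by apply/mem_imset/perm_inj.
have f_neq (A A' : {set T}) : A != A' -> f @: A != f @: A' by apply: contra => /eqP/f_inj->.
have fI (A A' : {set T}) : f @: A :&: f @: A' = f @: (A :&: A').
  by rewrite imsetI // => x y _ _; apply: perm_inj.
exists (f @: L1), (f @: L2), (f @: L3); split;
  [by rewrite !fB | by rewrite !mem_f p1 p2 p3 | by rewrite !f_neq | ].
apply: (leq_trans m_le); rewrite -(card_imset _ f_inj) subset_leq_card //.
apply/subsetP=> _ /imsetP [N + ->]; rewrite !inE => /andP [BN /and4P [pN c1 c2 c3]].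
by rewrite fB // mem_f pN !fI !imset_eq0 c1 c2 c3.
Qed.

Definition block l : {set T} := [set x in l].

Lemma card_block l : uniq l -> #|block l| = size l.
Proof. by move=> l_uniq; rewrite cardsE; apply/card_uniqP. Qed.

Definition distinct_blocks (s : seq (seq T)) : bool :=
  pairwise (fun w w' => ~~ (all (mem w') w && all (mem w) w')) s.

Lemma uniq_blocks s : distinct_blocks s -> uniq [seq block w | w <- s].
Proof.
rewrite uniq_pairwise pairwise_map; apply: sub_pairwise => w w' /=.
apply: contra => /eqP eq_ww'; have mem_ww' z : (z \in w) = (z \in w').
  by rewrite -[z \in w]in_set -[z \in w']in_set -/(block w) eq_ww'.
by apply/andP; split; apply/allP => z /=; rewrite mem_ww'.
Qed.

End Blocks.

Lemma uniq_map_inj_in (T1 T2 : eqType) (f : T1 -> T2) (s : seq T1) :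
  uniq (map f s) -> {in s &, injective f}.
Proof.
elim: s => //= z s IH /andP [fz_notin fs_uniq] x y.
rewrite !inE => /predU1P [-> | xs] /predU1P [-> | ys] // fxy.
- by move: fz_notin; rewrite fxy map_f.
- by move: fz_notin; rewrite -fxy map_f.
- exact: IH.
Qed.

Definition occurrences (s : seq nat) : seq nat := foldl (fun c x => incr_nth c x) [::] s.

Lemma nth_occurrences s j : nth 0 (occurrences s) j = count_mem j s.
Proof.
suff nth_foldl c : nth 0 (foldl (fun c x => incr_nth c x) c s) j = nth 0 c j + count_mem j s.
  by rewrite /occurrences nth_foldl nth_nil.
elim: s c => [|x s IH] c /=; first by rewrite addn0.
by rewrite IH nth_incr_nth addnA [(x == j) + _]addnC eq_sym.
Qed.

Lemma count_mem_flatten_ge (x : nat) (ss : seq (seq nat)) :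
  count (fun q => x \in q) ss <= count_mem x (flatten ss).
Proof.
elim: ss => //= q ss IH; rewrite count_cat leq_add //.
by case xq: (x \in q) => //=; rewrite -has_count has_pred1.
Qed.

(* [nth 0 c j3] counts the members of [pats] containing [j1], [j2] and [j3],
   with multiplicity, so it bounds the number of such members. *)
Definition triples_bounded (r m : nat) (pats : seq (seq nat)) : bool :=
  all (fun j1 => let P1 := [seq q <- pats | j1 \in q] in
    all (fun j2 => (j2 == j1) || let c := occurrences (flatten [seq q <- P1 | j2 \in q]) in
      all (fun j3 => [|| j3 == j1, j3 == j2 | nth 0 c j3 < m]) (iota 0 r))
    (iota 0 r)) (iota 0 r).

Lemma triples_boundedP r m pats j1 j2 j3 : triples_bounded r m pats ->
  j1 < r -> j2 < r -> j3 < r -> j1 != j2 -> j1 != j3 -> j2 != j3 ->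
  count (fun q => [&& j1 \in q, j2 \in q & j3 \in q]) pats < m.
Proof.
have in_r j : j < r -> j \in iota 0 r by rewrite mem_iota.
move=> /allP bounded /in_r j1r /in_r j2r /in_r j3r n12 n13 n23.
move/allP: (bounded j1 j1r) => /(_ j2 j2r); rewrite eq_sym (negPf n12) => /allP /(_ j3 j3r).
rewrite eq_sym (negPf n13) eq_sym (negPf n23) nth_occurrences; apply: leq_ltn_trans.
apply: leq_trans (count_mem_flatten_ge _ _); rewrite !count_filter.
by apply/eq_leq/eq_count => q /=; case: (j1 \in q) (j2 \in q) (j3 \in q) => [] [] [].
Qed.

Local Open Scope ring_scope.

Section Differences.
Variable T : zmodType.
Implicit Types (base : seq (seq T)) (l : seq T).

Definition shift l (s : T) : seq T := [seq x + s | x <- l].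

Lemma mem_shift l s z : (z \in shift l s) = (z - s \in l).
Proof.
apply/mapP/idP => [[x xl ->] | zl]; first by rewrite addrK.
by exists (z - s); rewrite ?subrK.
Qed.

Definition difference_triples base : seq (seq T * (T * T)) :=
  [seq t <- [seq (l, xy) | l <- base, xy <- [seq (x, y) | x <- l, y <- l]] | t.2.1 != t.2.2].

Definition differences base : seq T := [seq t.2.1 - t.2.2 | t <- difference_triples base].

Lemma mem_difference_triples base l x y :
  ((l, (x, y)) \in difference_triples base) = [&& l \in base, x \in l, y \in l & x != y].
Proof.
rewrite mem_filter /=; case: eqVneq => [-> | _]; first by rewrite !andbF.
rewrite andbT; apply/allpairsPdep/and3P.
  by case=> l' [_ [l'_base /allpairsP [[x' y'] [/= x'l' y'l' ->]] [-> -> ->]]].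
case=> l_base xl yl; exists l, (x, y); split=> //.
by apply/allpairsP; exists (x, y).
Qed.

Definition lines_through0 base : seq (seq T) := [seq shift l (- a) | l <- base, a <- l].

End Differences.

Section Development.
Variable T : finZmodType.
Implicit Types (base : seq (seq T)) (l w : seq T).

Definition develop base : {set {set T}} :=
  [set b | [exists s, has (fun l => b == block (shift l s)) base]].

Lemma developP base b :
  reflect (exists s, exists2 l, l \in base & b = block (shift l s)) (b \in develop base).
Proof.
rewrite inE; apply: (iffP existsP) => [[s /hasP [l l_base /eqP ->]] | [s [l l_base ->]]].
  by exists s, l.
by exists s; apply/hasP; exists l.
Qed.

Definition difference_family (k : nat) base : bool :=
  [&& all (fun l => uniq l && (size l == k)%N) base, uniq (0 :: differences base)
    & (size (differences base)).+1 == #|T|].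

Section DifferenceFamily.
Variables (k : nat) (base : seq (seq T)).
Hypothesis base_df : difference_family k base.

Lemma uniq_differences : uniq (differences base).
Proof. by case/and3P: base_df => _ /andP []. Qed.

Lemma mem_differences g : g != 0 -> g \in differences base.
Proof.
case/and3P: base_df => _ /card_uniqP card_d /eqP size_d g_nz.
have /subset_cardP/(_ (subset_predT _))/(_ g) : #|0 :: differences base| = #|T|.
  by rewrite card_d.
by rewrite !inE (negPf g_nz).
Qed.

Lemma card_develop b : b \in develop base -> #|b| = k.
Proof.
case/developP=> s [l l_base ->].
case/and3P: base_df => /allP /(_ l l_base) /andP [l_uniq /eqP <-] _ _.
by rewrite card_block ?size_map // map_inj_uniq //; apply: addIr.
Qed.

Lemma develop_pair_cover x y : x != y -> exists2 b, b \in develop base & (x \in b) && (y \in b).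
Proof.
move=> xy; have yx_nz : y - x != 0 by rewrite subr_eq0 eq_sym.
have /mapP [[l [a c]] t_in /= ac] := mem_differences yx_nz.
move: t_in; rewrite mem_difference_triples => /and4P [l_base al cl _].
exists (block (shift l (x - c))); first by apply/developP; exists (x - c), l.
rewrite !inE !mem_shift.
have -> : x - (x - c) = c by rewrite opprB addrC subrK.
have -> : y - (x - c) = a by rewrite opprB addrA addrAC ac subrK.
by rewrite al cl.
Qed.

(* Both blocks realise the difference y - x, which occurs only once among the differences. *)
Lemma develop_pair_unique b1 b2 x y : x != y -> b1 \in develop base -> b2 \in develop base ->
  [&& x \in b1, y \in b1, x \in b2 & y \in b2] -> b1 = b2.
Proof.
move=> xy /developP [s1 [l1 l1_base ->]] /developP [s2 [l2 l2_base ->]].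
rewrite !inE !mem_shift => /and4P [x1 y1 x2 y2].
have shift_neq s : y - s != x - s by apply: contraNneq xy => /addIr ->.
have t1 : (l1, (y - s1, x - s1)) \in difference_triples base.
  by rewrite mem_difference_triples l1_base x1 y1 shift_neq.
have t2 : (l2, (y - s2, x - s2)) \in difference_triples base.
  by rewrite mem_difference_triples l2_base x2 y2 shift_neq.
have same_diff s : y - s - (x - s) = y - x by rewrite opprB addrA subrK.
have /(_ _ _ t1 t2) := uniq_map_inj_in uniq_differences.
by rewrite /= !same_diff => /(_ erefl) [-> _ /addrI/oppr_inj ->].
Qed.

End DifferenceFamily.

Definition translation (c : T) : {perm T} := perm (addIr c).

Lemma translation_block l s c : translation c @: block (shift l s) = block (shift l (s + c)).
Proof.
apply/setP=> z; rewrite inE mem_shift opprD addrA.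
apply/imsetP/idP => [[w] | zl].
  by rewrite inE mem_shift permE => wl ->; rewrite addrAC addrK.
by exists (z - c); rewrite ?permE ?subrK // inE mem_shift addrAC.
Qed.

Lemma develop_translation base c :
  [set translation c @: (b : {set T}) | b in develop base] \subset develop base.
Proof.
apply/subsetP=> _ /imsetP [_ /developP [s [l l_base ->]] ->].
by rewrite translation_block; apply/developP; exists (s + c), l.
Qed.

Lemma rich_point_develop0 m base p :
  rich_point m (develop base) p -> rich_point m (develop base) 0.
Proof.
by move/(rich_point_imset (develop_translation base (- p))); rewrite permE subrr.
Qed.

Lemma lines_through0P base b :
  reflect (exists2 w, w \in lines_through0 base & b = block w) ((b \in develop base) && (0 \in b)).
Proof.
apply: (iffP andP) => [[/developP [s [l l_base ->]]] | [_ /allpairsPdep [l [a [l_base al ->]]] ->]].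
  rewrite inE mem_shift sub0r => l_s.
  exists (shift l (- - s)); last by rewrite opprK.
  by apply/allpairsPdep; exists l, (- s).
by split; [apply/developP; exists (- a), l | rewrite inE mem_shift sub0r opprK].
Qed.

Lemma line_through0_index base b : b \in develop base -> 0 \in b ->
  exists2 j, (j < size (lines_through0 base))%N & b = block (nth [::] (lines_through0 base) j).
Proof.
move=> b_dev b0; have /lines_through0P [w w_L0 ->] : (b \in develop base) && (0 \in b).
  by apply/andP.
by exists (index w (lines_through0 base)); rewrite ?index_mem ?nth_index.
Qed.

Definition rich_point0_witness base (m : nat) (L1 L2 L3 : seq T) (W : seq (seq T * T)) : bool :=
  let blocks := [seq shift t.1 t.2 | t <- W] in
  [&& all (mem (lines_through0 base)) [:: L1; L2; L3], distinct_blocks [:: L1; L2; L3],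
      all (fun t => t.1 \in base) W,
      all (fun w => [&& 0 \notin w, has (mem L1) w, has (mem L2) w & has (mem L3) w]) blocks,
      distinct_blocks blocks & (m <= size W)%N].

Lemma rich_point0_witnessP base m L1 L2 L3 W :
  rich_point0_witness base m L1 L2 L3 W -> rich_point m (develop base) 0.
Proof.
case/and5P=> /and4P [L1_0 L2_0 L3_0 _] /uniq_blocks L_uniq /allP W_base /allP W_meet.
case/andP=> /uniq_blocks W_uniq m_le.
have line0 L : L \in lines_through0 base -> (block L \in develop base) && (0 \in block L).
  by move=> L_0; apply/lines_through0P; exists L.
have /andP [L1_dev L1z] := line0 _ L1_0.
have /andP [L2_dev L2z] := line0 _ L2_0.
have /andP [L3_dev L3z] := line0 _ L3_0.
move: L_uniq; rewrite /= !inE !negb_or => /and3P [/andP [n12 n13] n23 _].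
exists (block L1), (block L2), (block L3); split;
  [by rewrite L1_dev L2_dev L3_dev | by rewrite L1z L2z L3z | by rewrite n12 n13 n23 | ].
apply: (leq_trans m_le); rewrite -(size_map (fun t => shift t.1 t.2)) -(size_map (@block T)).
rewrite -(card_uniqP W_uniq); apply/subset_leq_card/subsetP => _ /mapP [w w_W ->].
have /and4P [w0 w1 w2 w3] := W_meet w w_W.
case/mapP: w_W => [[l s] lsW ->] in w0 w1 w2 w3 *.
have meet L : has (mem L) (shift l s) -> block (shift l s) :&: block L != set0.
  by case/hasP=> z zw zL; apply/set0Pn; exists z; rewrite !inE zw.
rewrite in_set !meet // [0 \in _]inE w0 !andbT.
by apply/developP; exists s, l => //; apply: W_base lsW.
Qed.

End Development.

Lemma steiner_develop n k (base : seq (seq 'I_n.+1)) :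
  difference_family k base -> (2 < k)%N -> (k < n.+1)%N -> steiner_system 2 k (develop base).
Proof.
move=> base_df k_gt2 k_lt; split => //; first exact: card_develop base_df.
move=> _ /eqP/cards2P [x [y [xy ->]]].
have [b0 b0_dev /andP [xb0 yb0]] := develop_pair_cover base_df xy.
apply/eqP/cards1P; exists b0; apply/setP=> b; rewrite in_set1 in_set subUset !sub1set.
apply/and3P/eqP => [[b_dev xb yb] | ->]; last by split.
by apply: (develop_pair_unique base_df xy b_dev b0_dev); rewrite xb yb xb0 yb0.
Qed.

Section CyclicCertificate.
Variable n : nat.
Local Notation T := 'I_n.+1.
Implicit Types (base lines : seq (seq T)) (tab : seq nat) (w : seq T).
Local Notation line base j := (block (nth [::] (lines_through0 base) j)).

(* The points of T are listed as [inZp i]: [enum T] does not reduce under [vm_compute]. *)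
Definition translates base : seq (seq T) :=
  [seq shift l (inZp i) | l <- base, i <- iota 0 n.+1].

Lemma translatesP base b :
  reflect (exists2 w, w \in translates base & b = block w) (b \in develop base).
Proof.
apply: (iffP (developP _ _)) => [[s [l l_base ->]] | [_ /allpairsPdep [l [i [l_base _ ->]]] ->]].
  exists (shift l s) => //; apply/allpairsPdep; exists l, (val s).
  by rewrite mem_iota ltn_ord valZpK.
by exists (inZp i), l.
Qed.

Definition line_table lines : seq nat :=
  [seq find (fun L => inZp i \in L) lines | i <- iota 0 n.+1].

Definition line_table_correct lines tab : bool :=
  all (fun j => all (fun a : T => (a == 0) || (nth 0%N tab a == j)) (nth [::] lines j))
      (iota 0 (size lines)).

(* [tab] sends each nonzero point to the index of its line through 0, so that
   [line_pattern tab w] lists the lines through 0 met by [w]. *)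
Definition line_pattern tab w : seq nat := [seq nth 0%N tab z | z : T <- w & z != 0].

Definition no_rich_point_certificate base (m : nat) : bool :=
  let lines := lines_through0 base in
  let tab := line_table lines in
  line_table_correct lines tab &&
  triples_bounded (size lines) m [seq line_pattern tab w | w <- translates base].

Section Soundness.
Variables (base : seq (seq T)) (tab : seq nat).
Hypothesis tab_ok : line_table_correct (lines_through0 base) tab.

Lemma line_tableP j a :
  (j < size (lines_through0 base))%N -> a \in line base j -> a != 0 -> nth 0%N tab a = j.
Proof.
move=> j_lt; rewrite inE => a_j a_nz.
move/allP: tab_ok => /(_ j); rewrite mem_iota j_lt => /(_ isT) /allP /(_ a a_j).
by rewrite (negPf a_nz) => /eqP.
Qed.

Lemma card_transversals0 j1 j2 j3 : (j1 < size (lines_through0 base))%N ->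
  (j2 < size (lines_through0 base))%N -> (j3 < size (lines_through0 base))%N ->
  (#|transversals (develop base) 0%R (line base j1) (line base j2) (line base j3)| <=
   count (fun q => [&& j1 \in q, j2 \in q & j3 \in q])
     [seq line_pattern tab w | w <- translates base])%N.
Proof.
move=> j1_lt j2_lt j3_lt; rewrite count_map -size_filter -(size_map (@block _)).
apply: (leq_trans _ (card_size _)); apply/subset_leq_card/subsetP => N.
rewrite in_set => /andP [/translatesP [w w_tr ->] /and4P [w0 m1 m2 m3]].
apply: map_f; rewrite mem_filter w_tr andbT.
have meets j : (j < size (lines_through0 base))%N -> block w :&: line base j != set0 ->
    j \in line_pattern tab w.
  move=> j_lt /set0Pn [a]; rewrite inE => /andP [aw aj].
  have a_nz : a != 0 by apply: contraNneq w0 => <-.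
  apply/mapP; exists a; last by rewrite (line_tableP j_lt aj a_nz).
  by rewrite mem_filter a_nz -[a \in w]in_set.
by rewrite /= !meets.
Qed.

End Soundness.

Lemma no_rich_point base m : no_rich_point_certificate base m ->
  forall p, ~ rich_point m (develop base) p.
Proof.
case/andP=> tab_ok bounded p /rich_point_develop0.
case=> [L1 [L2 [L3 [/and3P [L1_dev L2_dev L3_dev] /and3P [L10 L20 L30] /and3P [n12 n13 n23] m_le]]]].
have [j1 j1_lt eL1] := line_through0_index L1_dev L10.
have [j2 j2_lt eL2] := line_through0_index L2_dev L20.
have [j3 j3_lt eL3] := line_through0_index L3_dev L30.
subst L1 L2 L3; have index_neq i j : line base i != line base j -> i != j.
  by apply: contraNneq => ->.
have := triples_boundedP bounded j1_lt j2_lt j3_lt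
  (index_neq _ _ n12) (index_neq _ _ n13) (index_neq _ _ n23).
by rewrite ltnNge (leq_trans m_le (card_transversals0 tab_ok j1_lt j2_lt j3_lt)).
Qed.

End CyclicCertificate.

Definition base1 : seq (seq 'I_505) :=
  map (map inZp)
    [:: [:: 0; 101; 457; 292; 412; 187; 167];
     [:: 0; 202; 103; 173; 168; 493; 73];
     [:: 0; 114; 253; 288; 309; 137; 312];
     [:: 0; 64; 18; 268; 14; 387; 122];
     [:: 0; 284; 143; 53; 504; 297; 352];
     [:: 0; 124; 98; 393; 469; 87; 47];
     [:: 0; 424; 498; 8; 219; 102; 177];
     [:: 0; 2; 71; 229; 317; 360; 379];
     [:: 0; 72; 31; 164; 302; 335; 9];
     [:: 0; 67; 106; 349; 267; 445; 324];
     [:: 0; 392; 281; 444; 17; 365; 49];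
     [:: 0; 477; 16; 329; 107; 10; 249]]%N.

Definition base2 : seq (seq 'I_505) :=
  map (map inZp)
    [:: [:: 0; 101; 345; 300; 195; 455; 220];
     [:: 0; 202; 376; 406; 476; 471; 291];
     [:: 0; 329; 468; 280; 197; 408; 427];
     [:: 0; 229; 183; 485; 22; 43; 222];
     [:: 0; 164; 23; 290; 287; 33; 417];
     [:: 0; 349; 323; 340; 232; 178; 367];
     [:: 0; 444; 13; 120; 272; 348; 82];
     [:: 0; 1; 48; 56; 114; 337; 369];
     [:: 0; 36; 213; 501; 64; 12; 154];
     [:: 0; 286; 93; 361; 284; 432; 494];
     [:: 0; 196; 318; 371; 124; 402; 109];
     [:: 0; 491; 338; 226; 424; 332; 389]]%N.

Lemma difference_family_base1 : difference_family 7 base1.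
Proof. by rewrite /difference_family card_ord; vm_compute. Qed.

Lemma difference_family_base2 : difference_family 7 base2.
Proof. by rewrite /difference_family card_ord; vm_compute. Qed.

Lemma rich_point_base1 : rich_point 10 (develop base1) 0.
Proof.
apply: (@rich_point0_witnessP _ _ _ (nth [::] (lines_through0 base1) 37)
  (nth [::] (lines_through0 base1) 51) (nth [::] (lines_through0 base1) 83)
  [seq (nth [::] base1 t.1, inZp t.2) | t <- [:: (0, 79); (1, 268); (1, 363); (2, 158);
     (3, 144); (4, 11); (8, 459); (9, 140); (9, 494); (11, 484)]%N]).
by vm_compute.
Qed.

Lemma no_rich_point_base2 : no_rich_point_certificate base2 10.
Proof. by vm_compute. Qed.

Theorem mainTheorem1 :
  (exists B1 B2 : {set {set 'I_505}},
     [/\ steiner_system 2 7 B1, steiner_system 2 7 B2 & ~ design_iso B1 B2])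
  /\ (exists B : {set {set 'I_505}}, steiner_system 2 7 B).
Proof.
have design1 := steiner_develop difference_family_base1 isT isT.
have design2 := steiner_develop difference_family_base2 isT isT.
split; last by exists (develop base1).
exists (develop base1), (develop base2); split=> // -[f iso_f].
apply: (no_rich_point no_rich_point_base2 (p := f 0)).
by apply: rich_point_imset rich_point_base1; rewrite iso_f.
Qed.
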